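(* Let $N\ge 2k$ be integers with $k\in\{1,2,3,4\}$, let $h>0$, $\alpha_1,\alpha_2,\alpha_3\in\mathbb{R}$, and let $\mathcal{D}_1,\mathcal{D}_2,\mathcal{D}_3\in\mathbb{C}^{N^3\times N^3}$ be as defined in the context. Define the block matrices $$\mathcal{CURL}_{\vec{\mathrm{k}}}=\begin{pmatrix}0&-\mathcal{D}_3&\mathcal{D}_2\\ \mathcal{D}_3&0&-\mathcal{D}_1\\ -\mathcal{D}_2&\mathcal{D}_1&0\end{pmatrix},\qquad \mathcal{DIV}_{\vec{\mathrm{k}}}=\begin{pmatrix}\mathcal{D}_1&\mathcal{D}_2&\mathcal{D}_3\end{pmatrix},$$ and $$\vec L_{\vec{\mathrm{k}}}:=\mathcal{CURL}_{\vec{\mathrm{k}}}\mathcal{CURL}_{\vec{\mathrm{k}}}'+\mathcal{DIV}_{\vec{\mathrm{k}}}'\mathcal{DIV}_{\vec{\mathrm{k}}},\qquad L_{\vec{\mathrm{k}}}:=\mathcal{DIV}_{\vec{\mathrm{k}}}\mathcal{DIV}_{\vec{\mathrm{k}}}'.$$ Then $\vec L_{\vec{\mathrm{k}}}=\mathrm{diag}(L_{\vec{\mathrm{k}}},L_{\vec{\mathrm{k}}},L_{\vec{\mathrm{k}}})$ (block diagonal).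
   Context: $X'$ denotes conjugate transpose, $I_N$ the $N\times N$ identity, $\otimes$ the Kronecker product, $\mathrm{i}=\sqrt{-1}$. For $\vec a\in\mathbb{R}^N$, $\mathrm{Circ}(\vec a)$ is the circulant matrix with $\mathrm{Circ}(\vec a)_{ij}=a_{((j-i)\bmod N)+1}$. Let $\mathbb{D}_1=\mathrm{Circ}(\vec v_1)$, $\mathbb{D}_0=\mathrm{Circ}(\vec v_0)$ with $\vec v_1=(-c_1,c_1,c_2,\dots,c_k,0,\dots,0,-c_k,\dots,-c_2)^T$, $\vec v_0=(d_1,d_1,d_2,\dots,d_k,0,\dots,0,d_k,\dots,d_2)^T\in\mathbb{R}^N$, where: $k=1$: $c_1=1$, $d_1=1/2$; $k=2$: $(c_1,c_2)=(9/8,-1/24)$, $(d_1,d_2)=(9/16,-1/16)$; $k=3$: $(c_1,c_2,c_3)=(25/64,-25/384,3/640)$, $(d_1,d_2,d_3)=(75/128,-25/256,3/256)$; $k=4$: $(c_1,\dots,c_4)=(1225/1024,-245/3072,49/5120,-5/7168)$, $(d_1,\dots,d_4)=(1225/2048,-245/2048,49/2048,-5/2048)$. Set $K_1=I_N\otimes I_N\otimes(\mathbb{D}_1/h)$, $K_2=I_N\otimes(\mathbb{D}_1/h)\otimes I_N$, $K_3=(\mathbb{D}_1/h)\otimes I_N\otimes I_N$, $L_1=I_N\otimes I_N\otimes(\alpha_1\mathbb{D}_0)$, $L_2=I_N\otimes(\alpha_2\mathbb{D}_0)\otimes I_N$, $L_3=(\alpha_3\mathbb{D}_0)\otimes I_N\otimes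 I_N$, and $\mathcal{D}_i=K_i+\mathrm{i}L_i$. *)

(* Complex numbers are R[i] = complex R over a real closed
   field R (mathcomp-real-closed); Kronecker product is mxtens's  A *t B
   (row-major, i.e. the standard Kronecker product). *)
From HB Require Import structures.
From mathcomp Require Import all_boot all_order all_algebra.
From mathcomp Require Import complex mxtens.
Set Implicit Arguments. Unset Strict Implicit. Unset Printing Implicit Defensive.
Import Order.TTheory GRing.Theory Num.Theory.
Local Open Scope ring_scope.
Local Open Scope complex_scope.

(* Circ(a)_{ij} = a_{((j-i) mod N)+1} (1-indexed); 0-indexed: a_{(j-i) mod N}. *)
Definition Circ (T : Type) (N : nat) (a : nat -> T) : 'M[T]_N :=
  \matrix_(i < N, j < N) a ((j + (N - i)) %% N)%N.

Definition ccoef (R : fieldType) (k m : nat) : R :=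
  match k, m with
  | 1, 1 => 1
  | 2, 1 => 9/8 | 2, 2 => -(1/24)
  | 3, 1 => 25/64 | 3, 2 => -(25/384) | 3, 3 => 3/640
  | 4, 1 => 1225/1024 | 4, 2 => -(245/3072) | 4, 3 => 49/5120 | 4, 4 => -(5/7168)
  | _, _ => 0
  end.

Definition dcoef (R : fieldType) (k m : nat) : R :=
  match k, m with
  | 1, 1 => 1/2
  | 2, 1 => 9/16 | 2, 2 => -(1/16)
  | 3, 1 => 75/128 | 3, 2 => -(25/256) | 3, 3 => 3/256
  | 4, 1 => 1225/2048 | 4, 2 => -(245/2048) | 4, 3 => 49/2048 | 4, 4 => -(5/2048)
  | _, _ => 0
  end.

(* v1 = (-c1, c1, c2, ..., ck, 0, ..., 0, -ck, ..., -c2)  (0-indexed entry i) *)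
Definition v1 (R : fieldType) (k N : nat) (i : nat) : R :=
  if i == 0%N then - ccoef R k 1
  else if (i <= k)%N then ccoef R k i
  else if (N - k < i)%N then - ccoef R k (N - i).+1
  else 0.

(* v0 = (d1, d1, d2, ..., dk, 0, ..., 0, dk, ..., d2) *)
Definition v0 (R : fieldType) (k N : nat) (i : nat) : R :=
  if i == 0%N then dcoef R k 1
  else if (i <= k)%N then dcoef R k i
  else if (N - k < i)%N then dcoef R k (N - i).+1
  else 0.

Definition Dmat1 (R : fieldType) (k N : nat) : 'M[R]_N := Circ N (v1 R k N).
Definition Dmat0 (R : fieldType) (k N : nat) : 'M[R]_N := Circ N (v0 R k N).

Section Ops.
Variables (R : rcfType) (k N : nat) (h a1 a2 a3 : R).
Local Notation C := R[i].
Local Notation M := (N * N * N)%N.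

Definition toC {m n} (A : 'M[R]_(m, n)) : 'M[C]_(m, n) := map_mx (fun x => x%:C) A.
Definition ctr {m n} (A : 'M[C]_(m, n)) : 'M[C]_(n, m) := (map_mx (@conjc R) A)^T.

Definition IdN : 'M[R]_N := 1%:M.
Definition K1 : 'M[C]_M := toC ((IdN *t IdN) *t (h^-1 *: Dmat1 R k N)).
Definition K2 : 'M[C]_M := toC ((IdN *t (h^-1 *: Dmat1 R k N)) *t IdN).
Definition K3 : 'M[C]_M := toC (((h^-1 *: Dmat1 R k N) *t IdN) *t IdN).
Definition L1 : 'M[C]_M := toC ((IdN *t IdN) *t (a1 *: Dmat0 R k N)).
Definition L2 : 'M[C]_M := toC ((IdN *t (a2 *: Dmat0 R k N)) *t IdN).
Definition L3 : 'M[C]_M := toC (((a3 *: Dmat0 R k N) *t IdN) *t IdN).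
Definition calD1 : 'M[C]_M := K1 + 'i *: L1.
Definition calD2 : 'M[C]_M := K2 + 'i *: L2.
Definition calD3 : 'M[C]_M := K3 + 'i *: L3.

Definition CURL : 'M[C]_(M + (M + M)) :=
  col_mx (row_mx 0 (row_mx (- calD3) calD2))
 (col_mx (row_mx calD3 (row_mx 0 (- calD1)))
         (row_mx (- calD2) (row_mx calD1 0))).
Definition DIV : 'M[C]_(M, M + (M + M)) := row_mx calD1 (row_mx calD2 calD3).
Definition vecL : 'M[C]_(M + (M + M)) := CURL *m ctr CURL + ctr DIV *m DIV.
Definition scalL : 'M[C]_M := DIV *m ctr DIV.
End Ops.

Definition blockdiag3 (C : pzRingType) (m : nat) (A : 'M[C]_m) : 'M[C]_(m + (m + m)) :=
  block_mx A 0 0 (block_mx A 0 0 A).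

(* For N > 0 a circulant matrix is [\matrix_(i, j) f (j - i)] for some f on
   Z/NZ, and circulant matrices commute (reindex the product sum by
   l |-> i + j - l).  Each D_i is a triple Kronecker product of circulants and so
   is its adjoint, hence every D_i' commutes with every D_j.  For any three
   matrices with that property, expanding the blocks of CURL CURL' + DIV' DIV
   gives D1 D1' + D2 D2' + D3 D3' on the diagonal, while each off-diagonal block
   has the form D_i' D_j - D_j D_i' = 0. *)
From HB Require Import structures.
From mathcomp Require Import all_boot all_order all_algebra.
From mathcomp Require Import complex mxtens ring.
Set Implicit Arguments. Unset Strict Implicit. Unset Printing Implicit Defensive.
Import Order.TTheory GRing.Theory Num.Theory.
Local Open Scope ring_scope.

Section ZmodCirculant.
Variables (T : comPzRingType) (n : nat).

Definition circZ (f : 'I_n.+1 -> T) : 'M[T]_n.+1 := \matrix_(i, j) f (j - i).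

Lemma circZ_mulC f g : circZ f *m circZ g = circZ g *m circZ f.
Proof.
apply/matrixP=> i j; rewrite !mxE.
have reflK : involutive (fun l : 'I_n.+1 => i + j - l).
  by move=> l; rewrite opprB addrC subrK.
rewrite (reindex_inj (inv_inj reflK)) /=; apply: eq_bigr => l _.
rewrite !mxE mulrC; congr (g _ * f _).
- by rewrite opprB [i + j]addrC opprD addrCA addNKr.
- by rewrite addrAC [i + j]addrC addrK.
Qed.

Lemma scalar1_circZ : 1%:M = circZ (fun x => (x == 0)%:R).
Proof. by apply/matrixP=> i j; rewrite !mxE subr_eq0 eq_sym. Qed.

Lemma Circ_circZ (a : nat -> T) : Circ n.+1 a = circZ (fun x => a (val x)).
Proof. by apply/matrixP=> i j; rewrite !mxE /= modnDmr. Qed.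

Definition circ3 (f g e : 'I_n.+1 -> T) := (circZ f *t circZ g) *t circZ e.

Lemma circ3_mulC f g e f' g' e' :
  circ3 f g e *m circ3 f' g' e' = circ3 f' g' e' *m circ3 f g e.
Proof. by rewrite /circ3 !tensmx_mul (circZ_mulC f) (circZ_mulC g) (circZ_mulC e). Qed.

End ZmodCirculant.

Lemma tensmx3P (T : pzRingType) (m1 n1 m2 n2 m3 n3 : nat) (A : 'M[T]_(m1, n1))
    (B : 'M[T]_(m2, n2)) (D : 'M[T]_(m3, n3)) (P : 'M[T]_(m1 * m2 * m3, n1 * n2 * n3)) :
  (forall i1 i2 i3 j1 j2 j3,
      P (mxtens_index (mxtens_index (i1, i2), i3))
        (mxtens_index (mxtens_index (j1, j2), j3)) = A i1 j1 * B i2 j2 * D i3 j3) ->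
  P = (A *t B) *t D.
Proof.
move=> PE; apply/matrixP=> i j.
case: (mxtens_indexP i) => i12 i3; case: (mxtens_indexP i12) => i1 i2.
case: (mxtens_indexP j) => j12 j3; case: (mxtens_indexP j12) => j1 j2.
by rewrite PE !tensmxE.
Qed.

Local Open Scope complex_scope.

Section Adjoint.
Variable R : rcfType.
Local Notation C := R[i].

Lemma ctr0 m n : ctr (0 : 'M[C]_(m, n)) = 0.
Proof. by rewrite /ctr map_mx0 trmx0. Qed.

Lemma ctrN m n (A : 'M[C]_(m, n)) : ctr (- A) = - ctr A.
Proof. by rewrite /ctr map_mxN linearN. Qed.

Lemma ctr_row_mx m n1 n2 (A : 'M[C]_(m, n1)) (B : 'M[C]_(m, n2)) :
  ctr (row_mx A B) = col_mx (ctr A) (ctr B).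
Proof. by rewrite /ctr map_row_mx tr_row_mx. Qed.

Lemma ctr_col_mx m1 m2 n (A : 'M[C]_(m1, n)) (B : 'M[C]_(m2, n)) :
  ctr (col_mx A B) = row_mx (ctr A) (ctr B).
Proof. by rewrite /ctr map_col_mx tr_col_mx. Qed.

Definition adjZ n (f : 'I_n.+1 -> C) (x : 'I_n.+1) := (f (- x))^*.

Lemma ctr_circ3 n (f g e : 'I_n.+1 -> C) :
  ctr (circ3 f g e) = circ3 (adjZ f) (adjZ g) (adjZ e).
Proof.
by apply: tensmx3P => *; rewrite /ctr /circ3 !(tensmxE, mxE) /adjZ !rmorphM !opprB.
Qed.

Lemma blockdiag3E m (A : 'M[C]_m) :
  blockdiag3 A = col_mx (row_mx A (row_mx 0 0))
    (col_mx (row_mx 0 (row_mx A 0)) (row_mx 0 (row_mx 0 A))).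
Proof.
rewrite /blockdiag3 row_mx0 -[0 : 'M_(m + m, m)]col_mx0.
by rewrite [block_mx A 0 0 A]block_mxEv [block_mx A 0 _ _]block_mxEv -block_mxEh.
Qed.

Lemma curl_div_blockdiag m (D1 D2 D3 : 'M[C]_m) :
    {in [:: D1; D2; D3] &, forall X Y, ctr X *m Y = Y *m ctr X} ->
  let CU := col_mx (row_mx 0 (row_mx (- D3) D2))
    (col_mx (row_mx D3 (row_mx 0 (- D1))) (row_mx (- D2) (row_mx D1 0))) in
  let DV := row_mx D1 (row_mx D2 D3) in
  CU *m ctr CU + ctr DV *m DV = blockdiag3 (DV *m ctr DV).
Proof.
move=> Dcomm CU DV; rewrite /CU /DV blockdiag3E.
rewrite !(ctr_row_mx, ctr_col_mx, ctr0, ctrN).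
rewrite !(mul_col_mx, mul_mx_row, mul_row_col, mul_col_row, mulmxN, mulNmx,
  mul0mx, mulmx0, opprK, add0r, addr0).
rewrite /block_mx !(add_col_mx, add_row_mx).
rewrite !Dcomm ?inE ?eqxx ?orbT //.
rewrite !(oppr0, sub0r, subr0, addNr, add0r, addr0).
have addr3_rev (a b c : 'M[C]_m) : c + b + a = a + (b + c).
  by rewrite addrC (addrC c).
have addr3_rot (a b c : 'M[C]_m) : c + a + b = a + (b + c).
  by rewrite addrAC addr3_rev.
have addr3_swap (a b c : 'M[C]_m) : b + a + c = a + (b + c).
  by rewrite (addrC b) addrA.
by rewrite addr3_rev addr3_rot addr3_swap.
Qed.

End Adjoint.

Section FiniteDifferenceSymbols.
Variables (R : rcfType) (k n : nat) (h a1 a2 a3 : R).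
Local Notation C := R[i].
Local Notation N := n.+1.

Definition delta0 (x : 'I_N) : C := ((x == 0)%:R : R)%:C.

Definition stencil (b c : R) (x : 'I_N) : C :=
  (b * v1 R k N x)%:C + 'i * (c * v0 R k N x)%:C.

Lemma calD1_circ3 : calD1 k N h a1 = circ3 delta0 delta0 (stencil h^-1 a1).
Proof.
apply: tensmx3P => *.
rewrite /calD1 /K1 /L1 /toC /Dmat1 /Dmat0 /IdN scalar1_circZ !Circ_circZ.
by rewrite !(tensmxE, mxE) /delta0 /stencil !rmorphM /=; ring.
Qed.

Lemma calD2_circ3 : calD2 k N h a2 = circ3 delta0 (stencil h^-1 a2) delta0.
Proof.
apply: tensmx3P => *.
rewrite /calD2 /K2 /L2 /toC /Dmat1 /Dmat0 /IdN scalar1_circZ !Circ_circZ.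
by rewrite !(tensmxE, mxE) /delta0 /stencil !rmorphM /=; ring.
Qed.

Lemma calD3_circ3 : calD3 k N h a3 = circ3 (stencil h^-1 a3) delta0 delta0.
Proof.
apply: tensmx3P => *.
rewrite /calD3 /K3 /L3 /toC /Dmat1 /Dmat0 /IdN scalar1_circZ !Circ_circZ.
by rewrite !(tensmxE, mxE) /delta0 /stencil !rmorphM /=; ring.
Qed.

Lemma calD_ctr_mulC :
  {in [:: calD1 k N h a1; calD2 k N h a2; calD3 k N h a3] &,
    forall X Y, ctr X *m Y = Y *m ctr X}.
Proof.
have circ3_calD X : X \in [:: calD1 k N h a1; calD2 k N h a2; calD3 k N h a3] ->
    exists f g e, X = circ3 f g e.
  rewrite !inE => /or3P[] /eqP ->;
    [rewrite calD1_circ3 | rewrite calD2_circ3 | rewrite calD3_circ3]; by do 3 eexists.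
move=> X Y /circ3_calD[f [g [e ->]]] /circ3_calD[f' [g' [e' ->]]].
by rewrite ctr_circ3 circ3_mulC.
Qed.

End FiniteDifferenceSymbols.

Theorem corollary4p8 (R : rcfType) (k N : nat) (h a1 a2 a3 : R) :
  (1 <= k <= 4)%N -> (2 * k <= N)%N -> 0 < h ->
  vecL k N h a1 a2 a3 = blockdiag3 (scalL k N h a1 a2 a3).
Proof.
move=> _ _ _; case: N => [|n]; first by apply/matrixP => -[].
rewrite /vecL /scalL /CURL /DIV.
exact: curl_div_blockdiag (@calD_ctr_mulC _ k n h a1 a2 a3).
Qed.
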